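(* Let $\mathbf x_1,\dots,\mathbf x_n\in\mathbb C^N$ be orthonormal with $n\le N$, $\mathbf X=[\mathbf x_1\ \cdots\ \mathbf x_n]$, $\mathbf Y=[\mathrm{Re}(\mathbf X)\ \ \mathrm{Im}(\mathbf X)]\in\mathbb R^{N\times 2n}$ and $\mathbf A=\mathbf X^T\mathbf X\mathbf X^H\mathbf X^*$. Then the $2n$ eigenvalues of $\mathbf Y^T\mathbf Y$ are $$\Big\{\tfrac{1+\sqrt{\lambda_k(\mathbf A)}}{2},\ \tfrac{1-\sqrt{\lambda_k(\mathbf A)}}{2}\ :\ k=1,\dots,n\Big\}.$$
   Context: $^*$ denotes entrywise conjugation; $\lambda_k(\mathbf A)$ are the eigenvalues of the Hermitian positive semidefinite matrix $\mathbf A$. *)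

(* The complex field is modelled by an arbitrary
   numClosedFieldType C (e.g. algC), with conjugation Num.conj,
   real/imaginary parts 'Re/'Im and the principal square root sqrtC. *)
From HB Require Import structures.
From mathcomp Require Import all_boot all_order all_algebra.
Set Implicit Arguments. Unset Strict Implicit. Unset Printing Implicit Defensive.
Import Order.TTheory GRing.Theory Num.Theory.
Local Open Scope ring_scope.

Definition conjmx (C : numClosedFieldType) m n (X : 'M[C]_(m, n)) : 'M[C]_(m, n) :=
  map_mx Num.conj X.

Definition adjmx (C : numClosedFieldType) m n (X : 'M[C]_(m, n)) : 'M[C]_(n, m) :=
  (conjmx X)^T.

(* Y = [Re X  Im X]  (real matrix, viewed inside C) *)
Definition reim_mx (C : numClosedFieldType) m n (X : 'M[C]_(m, n)) : 'M[C]_(m, n + n) :=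
  row_mx (map_mx (fun z => 'Re z) X) (map_mx (fun z => 'Im z) X).

Definition Amx (C : numClosedFieldType) m n (X : 'M[C]_(m, n)) : 'M[C]_n :=
  X^T *m X *m adjmx X *m conjmx X.

From Pilot Require Import Defs.
From HB Require Import structures.
From mathcomp Require Import all_boot all_order all_algebra.
Set Implicit Arguments. Unset Strict Implicit. Unset Printing Implicit Defensive.
Import Order.TTheory GRing.Theory Num.Theory.
Local Open Scope ring_scope.

(* With Y = [Re X  Im X], right multiplication by the invertible
   block matrix S = [[1, 1], [i, -i]] turns Y into [X  X^*], and by its
   conjugate S' into [X^*  X].  Since S'^T S = 2 and X^H X = 1, the congruence
   S'^T (x - Y^T Y) S equals the block matrix [[(2x-1), -X^H X^*],
   [-X^T X, (2x-1)]], whose determinant is det((2x-1)^2 - A) by a Schur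
   complement.  Hence, up to the factor 2^(2n),
     char(Y^T Y)(x) = char(A)((2x-1)^2) = prod_k ((2x-1)^2 - lam_k),
   and each factor (2x-1)^2 - lam_k splits as 4 (x - (1+sqrt lam_k)/2)
   (x - (1-sqrt lam_k)/2). *)

Lemma det_scalar_block (F : fieldType) n (c : F) (P Q : 'M[F]_n) : c != 0 ->
  \det (block_mx c%:M P Q c%:M) = \det ((c ^+ 2)%:M - Q *m P).
Proof.
move=> c_neq0.
set L := block_mx (1 : 'M[F]_n) 0 (- c^-1 *: Q) 1.
have detL : \det L = 1 by rewrite det_lblock !det1 mulr1.
rewrite -[LHS]mul1r -detL -det_mulmx mulmx_block !mul1mx !mul0mx !addr0.
rewrite mul_mx_scalar scalerA mulrN mulfV // scaleN1r addNr det_ublock det_scalar.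
have -> : - c^-1 *: Q *m P + c%:M = c^-1 *: ((c ^+ 2)%:M - Q *m P).
  by rewrite scalerBr scale_scalar_mx expr2 mulKf // addrC -scalemxAl scaleNr.
by rewrite detZ mulrA -exprMn mulfV // expr1n mul1r.
Qed.

Lemma horner_char_poly (R : comNzRingType) n (A : 'M[R]_n) (x : R) :
  (char_poly A).[x] = \det (x%:M - A).
Proof.
rewrite /char_poly -horner_evalE -det_map_mx; congr (\det _).
apply/matrixP => i j; rewrite !mxE /= horner_evalE.
by rewrite hornerD hornerN hornerMn hornerX hornerC.
Qed.

(* In characteristic zero, two polynomials agreeing at 1, 2, 3, ... are equal:
   their difference has more distinct roots than its size. *)
Lemma poly_eq_at_pos_nat (R : numDomainType) (p q : {poly R}) :
  (forall i : nat, p.[i.+1%:R] = q.[i.+1%:R]) -> p = q.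
Proof.
move=> agree; apply/eqP; rewrite -subr_eq0; apply/eqP.
apply: (@roots_geq_poly_eq0 _ _ [seq i.+1%:R | i <- iota 0 (size (p - q))]).
- by apply/allP => _ /mapP [i _ ->]; rewrite /root !hornerE agree subrr.
- by rewrite map_inj_uniq ?iota_uniq // => i j /eqP; rewrite eqr_nat => /eqP [].
- by rewrite size_map size_iota.
Qed.

Lemma half_roots_factor (F : numFieldType) (x s : F) :
  (x - (1 + s) / 2) * (x - (1 - s) / 2) * 2 ^+ 2 = (x *+ 2 - 1) ^+ 2 - s ^+ 2.
Proof.
have double a : (x - a / 2) * 2 = x *+ 2 - a.
  by rewrite mulrBl divfK ?pnatr_eq0 // mulr_natr.
rewrite expr2 mulrACA !double subr_sqr opprD addrA; congr (_ * _).
by rewrite opprB addrA addrAC.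
Qed.

Section ReImGram.
Variables (C : numClosedFieldType) (N n : nat) (X : 'M[C]_(N, n)).

Local Notation Y := (reim_mx X).
Local Notation conjX := (Defs.conjmx X).

Let S := block_mx (1 : 'M[C]_n) 1 ('i%:M) ((- 'i)%:M).
Let S' := block_mx (1 : 'M[C]_n) 1 ((- 'i)%:M) ('i%:M).

(* Y S = [Re X + i Im X,  Re X - i Im X] = [X  X^*]. *)
Lemma reim_mulS : Y *m S = row_mx X conjX.
Proof.
rewrite /reim_mx mul_row_block !mulmx1 !mul_mx_scalar.
congr row_mx; apply/matrixP => i j; rewrite !mxE; first exact/esym/Crect.
by rewrite mulNr [in RHS](Crect (X i j)) conjC_rect.
Qed.

Lemma reim_mulS' : Y *m S' = row_mx conjX X.
Proof.
rewrite /reim_mx mul_row_block !mulmx1 !mul_mx_scalar.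
congr row_mx; apply/matrixP => i j; rewrite !mxE; last exact/esym/Crect.
by rewrite mulNr [in RHS](Crect (X i j)) conjC_rect.
Qed.

Lemma trS'_mulS : S'^T *m S = 2%:M.
Proof.
rewrite tr_block_mx !tr_scalar_mx mulmx_block -!scalar_mxM -!raddfD /=.
rewrite !mulr1 !mulrN !mulNr mulCii !opprK subrr.
by rewrite [RHS]scalar_mx_block !raddf0.
Qed.

Hypothesis X_orthonormal : adjmx X *m X = 1%:M.

Lemma reim_gram_congr : S'^T *m (Y^T *m Y) *m S =
  block_mx 1 (adjmx X *m conjX) (X^T *m X) 1.
Proof.
rewrite !mulmxA -mulmxA -trmx_mul reim_mulS' reim_mulS tr_row_mx mul_col_row.
have XHX : conjX^T *m X = 1 by exact: X_orthonormal.
by rewrite XHX -[X^T *m conjX]trmxK trmx_mul trmxK XHX trmx1.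
Qed.

Lemma det_reim_gram (x : C) : x *+ 2 - 1 != 0 ->
  \det (x%:M - Y^T *m Y) * 2 ^+ (n + n) = \det (((x *+ 2 - 1) ^+ 2)%:M - Amx X).
Proof.
move=> c_neq0.
have scaled : \det (S'^T *m (x%:M - Y^T *m Y) *m S) =
              \det (x%:M - Y^T *m Y) * 2 ^+ (n + n).
  by rewrite !det_mulmx mulrAC -det_mulmx trS'_mulS det_scalar mulrC.
rewrite -scaled mulmxBr mulmxBl reim_gram_congr mul_mx_scalar -scalemxAl.
rewrite trS'_mulS scale_scalar_mx [(_ * _)%:M]scalar_mx_block.
rewrite opp_block_mx add_block_mx.
have -> : (x * 2)%:M - 1 = (x *+ 2 - 1)%:M :> 'M[C]_n.
  by rewrite raddfB /= mulr_natr.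
by rewrite !add0r det_scalar_block // mulmxN mulNmx opprK /Amx !mulmxA.
Qed.

End ReImGram.

Unset Implicit Arguments.
Set Strict Implicit.

Theorem lemma6 (C : numClosedFieldType) (N n : nat) (X : 'M[C]_(N, n))
  (hnN : (n <= N)%N)
  (hX : adjmx X *m X = 1%:M)
  (lam : n.-tuple C)
  (hlam : char_poly (Amx X) = \prod_(k < n) ('X - (tnth lam k)%:P)) :
  char_poly ((reim_mx X)^T *m reim_mx X) =
  \prod_(k < n) (('X - ((1 + sqrtC (tnth lam k)) / 2)%:P) *
                 ('X - ((1 - sqrtC (tnth lam k)) / 2)%:P)).
Proof.
apply: poly_eq_at_pos_nat => i; set x : C := i.+1%:R.
have two_x_sub1 : x *+ 2 - 1 != 0.
  by rewrite -mulrnA (_ : 1 = 1%:R) // -natrB ?pnatr_eq0.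
have pow2_neq0 : (2 : C) ^+ (n + n) != 0 by rewrite expf_neq0 ?pnatr_eq0.
apply: (mulIf pow2_neq0).
rewrite horner_char_poly det_reim_gram // -horner_char_poly hlam !horner_prod.
have -> : (2 : C) ^+ (n + n) = \prod_(k < n) 2 ^+ 2.
  by rewrite prodr_const card_ord -exprM mulnC muln2 addnn.
rewrite -big_split /=; apply: eq_bigr => k _.
by rewrite hornerM !hornerXsubC half_roots_factor sqrtCK.
Qed.
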